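(* Let $p\ge5$, write $x=p-2$, and consider the black metallic tree $\mathcal B_\rho$ under the rightmost assignment (the last son of each node is black). For a node $\nu$ let $u$ be the nzm-code of $\nu-1$ and $v$ the nzm-code of $\nu-2$. Then the sons of the nodes, in increasing order, have the following nzm-codes: (1) root $\nu=1$: the sons are $h+1$ (one digit) for $h=1,\dots,p-4$, then $x$; (2) black $\nu\neq1$: the sons are $u\,h$ for $h=1,\dots,p-3$; (3) white $\nu$ with nzm-signature $1$ or $x$: first son $v\,x$, then $u\,(h-1)$ for $h=2,\dots,p-2$; (4) white $\nu$ with nzm-signature $a$, $1<a<x$: the sons $u\,h$ for $h=1,\dots,p-3$, then $u\,x$. Moreover: $\mathcal B_\rho$ does not have a preferred son property for the nzm-codes, whatever the digit chosen; for every node $\nu$, the integer whose nzm-code is the nzm-code of $\nu$ followed by $1$ (the successor of $\nu$) is a son of $\nu+1$ in $\mathcal B_\rho$, namely its leftmost son or its second son; and for no assignment $\alpha$ on the black metallic tree and no digit $a\in\{1,\dots,p-2\}$ does every node $\nu$ of $\mathcal B_\alpha$ have exactly one son whose nzm-code is the nzm-code of $\nu$ followed by $a$.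
   Context: Fix $p\ge5$. Metallic numbers: $m_{-1}=0$, $m_0=1$, $m_{n+2}=(p-2)m_{n+1}-m_n$. With $x=p-2$, $d=p-3$, the nzm-code of a positive integer $n$ is the unique word $a_k\cdots a_0$ over $\{1,\dots,p-2\}$ with $n=\sum a_im_i$ containing no factor $x\,d^j\,x$ ($j\ge0$); its nzm-signature is the last digit $a_0$; $w\,e$ denotes the word $w$ followed by the digit $e$. Black metallic tree under an assignment $\alpha$, $\mathcal B_\alpha$: nodes are the positive integers, each black or white; the root $1$ is black; nodes are processed in increasing order and node $\nu$ receives $p-2$ sons if white and $p-3$ sons if black, namely the smallest integers not yet used, in increasing order; an assignment specifies for each node the position (leftmost $=1$) of its unique black son among its sons, other sons being white. The rightmost assignment $\rho$ puts the black son at the last position. *)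

From mathcomp Require Import all_boot.
Set Implicit Arguments. Unset Strict Implicit. Unset Printing Implicit Defensive.

(* Metallic numbers, shifted so that metallic p n = m_n for n >= 0:
   m_0 = 1, m_1 = p-2, m_{n+2} = (p-2) m_{n+1} - m_n  (m_{-1} = 0). *)
Fixpoint mpair (p n : nat) : nat * nat :=
  match n with
  | 0 => (1, p - 2)
  | n'.+1 => let (a, b) := mpair p n' in (b, (p - 2) * b - a)
  end.
Definition metallic (p n : nat) : nat := (mpair p n).1.

(* Words are sequences of digits written most significant first:
   [:: a_k; ...; a_0].  "w e" (w followed by digit e) is rcons w e. *)
Definition wordval (p : nat) (w : seq nat) : nat :=
  \sum_(i < size w) nth 0 w i * metallic p (size w - 1 - i).

Definition forbidden (p j : nat) : seq nat := (p - 2) :: rcons (nseq j (p - 3)) (p - 2).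

Definition is_nzm_code (p n : nat) (w : seq nat) : Prop :=
  all (fun a => 0 < a <= p - 2) w /\
  (forall j, ~~ infix (forbidden p j) w) /\
  wordval p w = n.

Definition nsons (p : nat) (black : bool) : nat := if black then p - 3 else p - 2.

(* gen p pos k = colours (true = black) of all nodes created after
   processing nodes 1..k; entry i is the colour of node i+1.
   pos v c = position (1-based) of the black son of node v, of colour c. *)
Fixpoint gen (p : nat) (pos : nat -> bool -> nat) (k : nat) : seq bool :=
  match k with
  | 0 => [:: true]
  | k'.+1 =>
      let s := gen p pos k' in
      let c := nth false s k' in
      s ++ mkseq (fun i => i.+1 == pos k c) (nsons p c)
  end.

Definition black_pos p pos (v : nat) : bool := nth false (gen p pos v) v.-1.

Definition black (p : nat) (alpha : nat -> nat) (v : nat) : bool :=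
  black_pos p (fun u _ => alpha u) v.

Definition sons (p : nat) (alpha : nat -> nat) (v : nat) : seq nat :=
  iota (size (gen p (fun u _ => alpha u) v.-1)).+1 (nsons p (black p alpha v)).

Definition assignment (p : nat) (alpha : nat -> nat) : Prop :=
  forall v, 0 < v -> 0 < alpha v <= nsons p (black p alpha v).

Definition rho (p : nat) (v : nat) : nat :=
  nsons p (black_pos p (fun _ c => nsons p c) v).

Definition has_codes (p : nat) (s : seq nat) (L : seq (seq nat)) : Prop :=
  size s = size L /\
  forall i, i < size L -> is_nzm_code p (nth 0 s i) (nth [::] L i).

Definition preferred_son (p : nat) (alpha : nat -> nat) (a : nat) : Prop :=
  forall v, 0 < v -> forall w, is_nzm_code p v w ->
    exists n, n \in sons p alpha v /\ is_nzm_code p n (rcons w a).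

From mathcomp Require Import all_boot zify.
Set Implicit Arguments. Unset Strict Implicit. Unset Printing Implicit Defensive.

(* Enumerate the nzm-codes, written least significant digit first, with the
   successor map [incr].  The integers whose code is the code of n followed by
   one more digit form the interval (shift n, shift n.+1], of length p-3 or p-2
   according as the digit x is forbidden after the code of n or not.  In the
   tree the sons of consecutive nodes also form consecutive intervals, of length
   p-3 for a black node and p-2 for a white one.  An induction along the nodes
   shows that the sons of v start either at shift (v-1) + 1 or one step earlier,
   the latter only for white nodes of signature 1 or x; this yields the son codes
   and puts the successor shift v + 1 of v among the first two sons of v+1.
   Finally the root has code 1 and sons 2, ..., p-2, while every code 1a has
   value at least p-1, whatever the assignment. *)

Lemma metallicSS p n : metallic p n.+2 = (p - 2) * metallic p n.+1 - metallic p n.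
Proof. by rewrite /metallic /=; case: (mpair p n). Qed.

Lemma metallic_rec p n : 4 <= p ->
  metallic p n.+2 + metallic p n = (p - 2) * metallic p n.+1.
Proof.
move=> p_ge4.
suff [] : metallic p n <= metallic p n.+1 /\
          metallic p n.+2 + metallic p n = (p - 2) * metallic p n.+1 by [].
elim: n => [|n [le_n _]]; rewrite !metallicSS; first by rewrite /= /metallic /=; nia.
have le_Sn : metallic p n.+1 <= (p - 2) * metallic p n.+1 - metallic p n by nia.
split => //; nia.
Qed.

Section ReversedCodes.
Variable p : nat.

(* A code r is read from its last digit; [xblocked r] says that r begins with
   d^j x, so that the digit x cannot be appended to the code. *)
Fixpoint xblocked (r : seq nat) : bool :=
  if r is a :: r' then (a == p - 2) || (a == p - 3) && xblocked r' else false.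

Fixpoint rvalid (r : seq nat) : bool :=
  if r is a :: r' then [&& 0 < a <= p - 2, (a != p - 2) || ~~ xblocked r' & rvalid r']
  else true.

Fixpoint incr (r : seq nat) : seq nat :=
  if r is a :: r' then
    if a < p - 3 then a.+1 :: r'
    else if (a == p - 3) && ~~ xblocked r' then (p - 2) :: r'
    else 1 :: incr r'
  else [:: 1].

Fixpoint rval (k : nat) (r : seq nat) : nat :=
  if r is a :: r' then a * metallic p k + rval k.+1 r' else 0.

Definition nchildren (r : seq nat) : nat := if xblocked r then p - 3 else p - 2.

Lemma rval_sum k r : rval k r = \sum_(i < size r) nth 0 r i * metallic p (i + k).
Proof.
elim: r k => [|a r IH] k /=; first by rewrite big_ord0.
by rewrite big_ord_recl IH; congr (_ + _); apply: eq_bigr => i _; rewrite addSnnS.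
Qed.

Lemma wordval_rev r : wordval p (rev r) = rval 0 r.
Proof.
rewrite rval_sum /wordval size_rev (reindex_inj rev_ord_inj) /=.
apply: eq_bigr => i _; have i_lt := ltn_ord i.
by rewrite nth_rev ?addn0; [congr (nth _ _ _ * metallic _ _) | ]; lia.
Qed.

Lemma xblocked_prefix j r : prefix (rcons (nseq j (p - 3)) (p - 2)) r -> xblocked r.
Proof.
elim: j r => [|j IH] [|b r] //= /andP [/eqP <- pre]; first by rewrite eqxx.
by rewrite eqxx IH ?orbT.
Qed.

Lemma rvalid_is_nzm r : rvalid r -> is_nzm_code p (rval 0 r) (rev r).
Proof.
move=> r_valid; split; last split; last by rewrite wordval_rev.
  by rewrite all_rev; elim: r r_valid => //= a r IH /and3P [-> _ /IH].
move=> j; have -> : forbidden p j = rev (forbidden p j).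
  by rewrite /forbidden rev_cons rev_rcons rev_nseq.
rewrite infix_rev; elim: r r_valid => // a r IH /and3P [_ a_x /IH r_ok].
rewrite infix_consl (negbTE r_ok) orbF /forbidden prefix_cons.
apply/negP => /andP [/eqP a_eq /xblocked_prefix].
by move: a_x; rewrite -a_eq eqxx => /= /negbTE ->.
Qed.

Hypothesis p_ge5 : 5 <= p.

Lemma rval_rec k r : rval k.+2 r + rval k r = (p - 2) * rval k.+1 r.
Proof.
elim: r k => [|a r IH] k /=; first lia.
have := metallic_rec k (ltnW p_ge5); have := IH k.+1; nia.
Qed.

Lemma incr_spec r : rvalid r ->
  [/\ rval 0 (incr r) = (rval 0 r).+1,
      rval 1 (incr r) = rval 1 r + nchildren r & rvalid (incr r)].
Proof.
have [m0 m1] : metallic p 0 = 1 /\ metallic p 1 = p - 2 by [].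
elim: r => [|a r IH] /=; first by rewrite /nchildren m0 m1; split => //=; lia.
case/and3P=> a_range a_x r_valid; have [val0 val1 valid] := IH r_valid.
have rec := rval_rec 0 r; have rec' := rval_rec 0 (incr r).
rewrite /nchildren /=.
have [a_lt|a_ge] := ltnP a (p - 3).
  have [-> ->] : (a == p - 2) = false /\ (a == p - 3) = false by split; apply/eqP; lia.
  by rewrite /= r_valid !andbT; split; rewrite ?m0 ?m1; try lia.
move: a_x; have [-> _ | -> a_x] : a = p - 3 \/ a = p - 2 by lia.
  have -> : (p - 3 == p - 2) = false by apply/eqP; lia.
  rewrite eqxx m0 m1 /=; move: val1; rewrite /nchildren.
  case: (boolP (xblocked r)) => [xb|nxb] val1.
    by rewrite /= valid val1 m0; split => //; lia.
  by rewrite /= r_valid nxb; split => //; lia.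
have -> : (p - 2 == p - 3) = false by apply/eqP; lia.
have nxb : ~~ xblocked r by move: a_x; rewrite eqxx.
move: val1; rewrite /nchildren (negbTE nxb) => val1.
rewrite val0 val1 in rec'; rewrite /= eqxx valid m0 m1 val1 /=; split => //; nia.
Qed.

Definition code (n : nat) : seq nat := iter n incr [::].

(* The value of the code of n followed by the digit 0. *)
Definition shift (n : nat) : nat := rval 1 (code n).

Lemma codeS n : code n.+1 = incr (code n). Proof. by []. Qed.

Lemma code_spec n : rvalid (code n) /\ rval 0 (code n) = n.
Proof.
elim: n => [|n [valid val]] //=.
by have [-> _ ->] := incr_spec valid; rewrite val.
Qed.

Lemma shiftS n : shift n.+1 = shift n + nchildren (code n).
Proof. by have [] := incr_spec (proj1 (code_spec n)). Qed.

Lemma code_children_run n : code (shift n).+1 = 1 :: code n ->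
  forall h, 0 < h <= nchildren (code n) -> code (shift n + h) = h :: code n.
Proof.
move=> code_first; elim=> [|[|h] IH] // /andP [_ h_le]; first by rewrite addn1.
rewrite addnS codeS IH /=; last lia.
case: ltnP => [//|h_ge]; move: h_le; rewrite /nchildren.
case: (xblocked _) => /= h_lt; first lia.
have -> : h.+1 = p - 3 by lia.
by rewrite eqxx; congr (_ :: _); lia.
Qed.

Lemma code_shiftS n : code (shift n).+1 = 1 :: code n.
Proof.
elim: n => [//|n IH].
have run := code_children_run IH.
rewrite shiftS codeS run; last by rewrite /nchildren; case: ifP => _; lia.
rewrite /= /nchildren; case: (xblocked _) => /=; first by rewrite ltnn eqxx.
have -> : (p - 2 < p - 3) = false by lia.
by have -> : (p - 2 == p - 3) = false by apply/eqP; lia.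
Qed.

Lemma code_child n h : 0 < h <= nchildren (code n) -> code (shift n + h) = h :: code n.
Proof. exact: code_children_run (code_shiftS n) h. Qed.

Lemma code_is_nzm n : is_nzm_code p n (rev (code n)).
Proof. by have [valid val] := code_spec n; rewrite -{1}val; apply: rvalid_is_nzm. Qed.

Lemma code_child_is_nzm n h : 0 < h <= nchildren (code n) ->
  is_nzm_code p (shift n + h) (rcons (rev (code n)) h).
Proof. by move=> h_range; rewrite -rev_cons -code_child //; apply: code_is_nzm. Qed.

End ReversedCodes.

Section Tree.
Variable p : nat.
Hypothesis p_ge5 : 5 <= p.

Lemma nsons_ge2 c : 2 <= nsons p c.
Proof. by case: c; rewrite /nsons; lia. Qed.

Lemma gen_size pos k : k < size (gen p pos k).
Proof.
elim: k => [|k IH] //=; rewrite size_cat size_mkseq.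
by have := nsons_ge2 (nth false (gen p pos k) k); lia.
Qed.

Lemma gen_extend pos k d : exists s, gen p pos (d + k) = gen p pos k ++ s.
Proof.
elim: d => [|d [s IH]]; first by exists [::]; rewrite cats0.
by rewrite addSn /= IH -catA; eexists.
Qed.

Lemma nth_gen_stable pos k K i : k <= K -> i < size (gen p pos k) ->
  nth false (gen p pos K) i = nth false (gen p pos k) i.
Proof.
move=> /subnK <- i_lt; have [s ->] := gen_extend pos k (K - k).
by rewrite nth_cat i_lt.
Qed.

Definition rgen (k : nat) : seq bool := gen p (fun _ c => nsons p c) k.

Definition first_son (v : nat) : nat := (size (rgen v.-1)).+1.

Lemma gen_rho k : gen p (fun u _ => rho p u) k = rgen k.
Proof.
elim: k => [//|k IH]; rewrite /= IH.
suff -> : rho p k.+1 = nsons p (nth false (rgen k) k) by [].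
by rewrite /rho /black_pos /= -/(rgen k) nth_cat gen_size.
Qed.

Lemma black_rho v : black p (rho p) v = nth false (rgen v) v.-1.
Proof. by rewrite /black /black_pos gen_rho. Qed.

Lemma sons_rho v :
  sons p (rho p) v = iota (first_son v) (nsons p (black p (rho p) v)).
Proof. by rewrite /sons gen_rho. Qed.

Lemma black_rho_pred v : nth false (rgen v.-1) v.-1 = black p (rho p) v.
Proof. by rewrite black_rho (nth_gen_stable (leq_pred v)) // gen_size. Qed.

Lemma first_sonS v : 0 < v ->
  first_son v.+1 = first_son v + nsons p (black p (rho p) v).
Proof.
case: v => // v _; rewrite /first_son -black_rho_pred /rgen /= size_cat size_mkseq.
by rewrite addSn.
Qed.

Lemma first_son_gt v : v < first_son v.
Proof. by have := gen_size (fun _ c => nsons p c) v.-1; rewrite /first_son -/(rgen _); lia. Qed.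

Lemma black_son v i : 0 < v -> i < nsons p (black p (rho p) v) ->
  black p (rho p) (first_son v + i) = (i.+1 == nsons p (black p (rho p) v)).
Proof.
case: v => // v _; rewrite -black_rho_pred; set c := nth _ _ _ => i_lt.
have rgenS : rgen v.+1 = rgen v ++ mkseq (fun k => k.+1 == nsons p c) (nsons p c) by [].
have F_eq : first_son v.+1 = (size (rgen v)).+1 by [].
have v_lt := first_son_gt v.+1.
rewrite black_rho /rgen (nth_gen_stable (_ : v.+1 <= _)) -/(rgen _) ?rgenS; first last.
- by rewrite size_cat size_mkseq F_eq; lia.
- lia.
by rewrite F_eq nth_cat ltnNge addSn leq_addr /= addKn nth_mkseq.
Qed.

Lemma son_parent j : 1 < j -> exists v i,
  [/\ 0 < v, v < j, i < nsons p (black p (rho p) v) & j = first_son v + i].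
Proof.
elim: j => [//|j IH] j_gt1.
have [j_eq1|j_gt1'] := leqP j 1.
  have F1 : first_son 1 = 2 by [].
  exists 1, 0; have := nsons_ge2 (black p (rho p) 1); split => //; lia.
have [v [i [v_gt0 v_lt i_lt j_eq]]] := IH j_gt1'; subst j.
have [i_lt'|i_last] := ltnP i.+1 (nsons p (black p (rho p) v)).
  by exists v, i.+1; split; [done | lia | done | rewrite addnS].
exists v.+1, 0; have := first_son_gt v; have := first_sonS v_gt0.
by have := nsons_ge2 (black p (rho p) v.+1); split; lia.
Qed.

Lemma black_succ_white j : 1 < j -> black p (rho p) j -> ~~ black p (rho p) j.+1.
Proof.
move=> /son_parent [v [i [v_gt0 _ i_lt ->]]]; rewrite black_son // => /eqP i_last.
have n_ge2 := nsons_ge2 (black p (rho p) v.+1).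
have -> : (first_son v + i).+1 = first_son v.+1 + 0 by rewrite first_sonS; lia.
by rewrite black_son //; lia.
Qed.

End Tree.

Section Alignment.
Variable p : nat.
Hypothesis p_ge5 : 5 <= p.

Definition signature (n : nat) : nat := head 0 (code p n).

Lemma code_cons n : 0 < n -> code p n = signature n :: behead (code p n).
Proof.
case: n => // n _; rewrite /signature codeS.
by case: (code p n) => [|a r] //=; do 2 case: ifP => //.
Qed.

Lemma signature_succ n : 0 < n ->
  [/\ signature n < p - 3 -> signature n.+1 = (signature n).+1,
      signature n = p - 3 -> signature n.+1 = p - 2 \/ signature n.+1 = 1
    & signature n = p - 2 -> signature n.+1 = 1].
Proof.
move=> n_gt0.
have -> : signature n.+1 = head 0 (incr p (signature n :: behead (code p n))).
  by rewrite {1}/signature codeS {1}(code_cons n_gt0).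
move: (signature n) (behead _) => a r /=.
split=> [-> // | -> | ->]; first by rewrite ltnn eqxx /=; case: xblocked; [right | left].
have -> : (p - 2 < p - 3) = false by lia.
by have -> : (p - 2 == p - 3) = false by apply/eqP; lia.
Qed.

Lemma xblocked_code_pred v : 1 < v -> xblocked p (code p v.-1) = (signature v == 1).
Proof.
case: v => [|[|n]] // _; rewrite -pred_Sn; move: n.+1 (ltn0Sn n) => {}n n_gt0.
have [valid _] := code_spec p_ge5 n.
rewrite /signature codeS -/(signature n) (code_cons n_gt0) in valid *.
move: (signature n) (behead _) valid => a r /and3P [a_range a_x _] /=.
have [a_lt|a_ge] := ltnP a (p - 3).
  have [-> ->] : (a == p - 2) = false /\ (a == p - 3) = false by split; apply/eqP; lia.
  by rewrite /=; apply/esym/eqP; lia.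
have [->|->] : a = p - 3 \/ a = p - 2 by lia.
  rewrite eqxx /=; have -> : (p - 3 == p - 2) = false by apply/eqP; lia.
  by case: xblocked => //=; apply/esym/eqP; lia.
have -> : (p - 2 == p - 3) = false by apply/eqP; lia.
by rewrite eqxx.
Qed.

Lemma nchildren_code_pred v : 1 < v ->
  nchildren p (code p v.-1) = if signature v == 1 then p - 3 else p - 2.
Proof. by move=> v_gt1; rewrite /nchildren xblocked_code_pred. Qed.

Lemma signature_child n h : 0 < h <= nchildren p (code p n) -> signature (shift p n + h) = h.
Proof. by move=> h_range; rewrite /signature code_child. Qed.

(* The sons of v start at shift (v-1) + 1, the first integer whose code extends
   that of v-1, or one step before it; the side conditions make this an
   invariant of the induction on v. *)
Definition aligned (v : nat) : Prop :=
  (first_son p v = (shift p v.-1).+1 /\ (black p (rho p) v \/ 1 < signature v < p - 2)) \/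
  (first_son p v = shift p v.-1 /\ ~~ black p (rho p) v /\
   (signature v = 1 \/ signature v = p - 2) /\ ~~ xblocked p (code p v.-2)).

Lemma signature_son v i : 0 < v -> (1 < v -> aligned v) ->
  i < nsons p (black p (rho p) v) ->
  [\/ v = 1 /\ signature (first_son p v + i) = i.+2,
      signature (first_son p v + i) = i.+1
    | ~~ black p (rho p) v /\ signature (first_son p v + i) = if i is 0 then p - 2 else i].
Proof.
move=> v_gt0 al; have [v_eq1|v_gt1] := leqP v 1.
  have -> : v = 1 by lia.
  have black1 : black p (rho p) 1 by [].
  move=> i_lt; constructor 1; split => //.
  rewrite (_ : first_son p 1 + i = shift p 0 + i.+2) ?signature_child //.
  by move: i_lt; rewrite black1 /nsons /nchildren /=; lia.
have nch := nchildren_code_pred v_gt1.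
case: (al v_gt1) => [[F_eq col_sig] | [F_eq [white [_ not_xb]]]] i_lt.
  constructor 2; rewrite F_eq addSn -addnS signature_child // nch.
  move: i_lt; rewrite /nsons; case: col_sig => [-> | sig_mid]; first by case: ifP; lia.
  have -> : (signature v == 1) = false by apply/eqP; lia.
  by case: black; lia.
constructor 3; split => //; move: i_lt; rewrite F_eq (negbTE white) /= => i_lt.
case: i i_lt => [_|i i_lt]; last by rewrite signature_child // nch; case: eqP; lia.
have -> : v.-1 = v.-2.+1 by lia.
by rewrite addn0 shiftS // signature_child // /nchildren (negbTE not_xb); lia.
Qed.

Lemma signature_colour j : 1 < j -> (forall w, 1 < w < j -> aligned w) ->
  [/\ black p (rho p) j -> signature j = p - 3 \/ signature j = p - 2,
      ~~ black p (rho p) j -> signature j = p - 3 -> black p (rho p) j.+1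
    & ~~ black p (rho p) j -> signature j = p - 2 -> ~~ black p (rho p) j.+1].
Proof.
move=> j_gt1 al; have [v [i [v_gt0 v_lt i_lt j_eq]]] := son_parent p_ge5 j_gt1.
have al_v : 1 < v -> aligned v by move=> v_gt1; apply: al; rewrite v_gt1 v_lt.
subst j; clear al j_gt1 v_lt.
rewrite black_son // -addnS.
have black_next : i.+1 < nsons p (black p (rho p) v) ->
    black p (rho p) (first_son p v + i.+1) = (i.+2 == nsons p (black p (rho p) v)).
  exact: black_son.
case: (signature_son v_gt0 al_v i_lt) => [[v_eq1 ->] | -> | [/negbTE white ->]];
  move: i_lt black_next; rewrite /nsons.
- rewrite v_eq1 (_ : black p (rho p) 1) // => i_lt next.
  split=> [/eqP | /eqP i_ne sig | /eqP i_ne sig]; rewrite ?next; lia.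
- case: (black p (rho p) v) => i_lt next;
    split=> [/eqP | /eqP i_ne sig | /eqP i_ne sig]; rewrite ?next; lia.
- rewrite white; case: i => [|i] i_lt next;
    split=> [/eqP | /eqP i_ne sig | /eqP i_ne sig]; rewrite ?next; lia.
Qed.

Lemma aligned2 : aligned 2.
Proof.
have [black1 F1] : black p (rho p) 1 /\ first_son p 1 = 2 by [].
have shift0 : shift p 0 = 0 by [].
have sig2 : signature 2 = 2.
  by apply: (signature_child (n := 0) (h := 2)); rewrite /nchildren /=; lia.
left; split; last by right; rewrite sig2; lia.
by rewrite first_sonS // black1 F1 shiftS // shift0 /nchildren /=; lia.
Qed.

Lemma aligned_succ v : 1 < v -> (forall w, 1 < w <= v -> aligned w) -> aligned v.+1.
Proof.
move=> v_gt1 al; have v_gt0 : 0 < v by lia.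
have al_lt : forall w, 1 < w < v -> aligned w.
  by move=> w /andP [w_gt1 /ltnW w_le]; apply: al; rewrite w_gt1.
have [black_sig white_d white_x] := signature_colour v_gt1 al_lt.
have [sig_lt sig_d sig_x] := signature_succ v_gt0.
have F_next := first_sonS p_ge5 v_gt0.
have shift_v : shift p v = shift p v.-1 + if signature v == 1 then p - 3 else p - 2.
  by rewrite -{1}(ltn_predK v_gt1) shiftS // nchildren_code_pred.
have xb := xblocked_code_pred v_gt1.
have al_v : aligned v by apply: al; rewrite v_gt1 leqnn.
rewrite /aligned succnK.
case: al_v => [[F_eq col_sig] | [F_eq [white_v [sig_v _]]]].
- have [black_v | white_v] := boolP (black p (rho p) v).
    have sig_ne1 : (signature v == 1) = false by apply/eqP; have := black_sig black_v; lia.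
    right; rewrite F_next black_v shift_v xb sig_ne1 F_eq /nsons.
    split; first lia; split; first exact: black_succ_white.
    by split => //; case: (black_sig black_v) => [/sig_d | /sig_x]; lia.
  have sig_mid : 1 < signature v < p - 2 by case: col_sig => //; rewrite (negbTE white_v).
  have sig_ne1 : (signature v == 1) = false by apply/eqP; lia.
  left; rewrite F_next (negbTE white_v) shift_v sig_ne1 F_eq /nsons.
  split; first lia.
  have [sig_lt'|sig_eq] := ltnP (signature v) (p - 3); first by right; rewrite sig_lt //; lia.
  by left; apply: white_d; lia.
- rewrite F_next (negbTE white_v) shift_v xb F_eq /nsons.
  case: sig_v => sig_v; rewrite [signature v]sig_v /=.
    by left; split; [lia | right; rewrite sig_lt; lia].
  have sig_ne1 : (p - 2 == 1) = false by apply/eqP; lia.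
  right; rewrite sig_ne1; split; first lia.
  by split; [apply: white_x | split; [left; apply: sig_x|]].
Qed.

Lemma aligned_gt1 v : 1 < v -> aligned v.
Proof.
elim/ltn_ind: v => -[|[|[|v]]] // IH _; first exact: aligned2.
apply: aligned_succ => // w /andP [w_gt1 w_le]; apply: IH => //; lia.
Qed.

End Alignment.

Lemma nth_rcons_map_iota T (x0 : T) (f : nat -> T) a n x i : i <= n ->
  nth x0 (rcons [seq f h | h <- iota a n] x) i = if i < n then f (a + i) else x.
Proof.
move=> i_le; rewrite nth_rcons size_map size_iota.
case: ltngtP i_le => // i_lt _.
by rewrite (nth_map 0) ?size_iota // nth_iota.
Qed.

Lemma has_codes_iota p a n L : size L = n ->
  (forall i, i < n -> is_nzm_code p (a + i) (nth [::] L i)) -> has_codes p (iota a n) L.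
Proof.
move=> size_L codes; split=> [|i i_lt]; first by rewrite size_iota.
by rewrite nth_iota -?size_L //; apply: codes; rewrite -size_L.
Qed.

Section SonCodes.
Variable p : nat.
Hypothesis p_ge5 : 5 <= p.

Lemma white_gt1 v : ~~ black p (rho p) v -> 1 < v.
Proof. by case: v => [|[|v]]. Qed.

Lemma last_rev_code v : 0 < v -> last 0 (rev (code p v)) = signature p v.
Proof. by move=> v_gt0; rewrite (code_cons p v_gt0) rev_cons last_rcons. Qed.

Lemma root_sons_codes :
  has_codes p (sons p (rho p) 1) (rcons [seq [:: h.+1] | h <- iota 1 (p - 4)] [:: p - 2]).
Proof.
have [black1 F1] : black p (rho p) 1 /\ first_son p 1 = 2 by [].
rewrite (sons_rho p_ge5) black1 F1 /nsons; apply: has_codes_iota => [|i i_lt].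
  by rewrite size_rcons size_map size_iota; lia.
rewrite nth_rcons_map_iota; last lia.
have -> : (if i < p - 4 then [:: (1 + i).+1] else [:: p - 2]) = [:: i.+2].
  by case: ifP => i_cmp; congr [:: _]; lia.
by apply: (code_child_is_nzm p_ge5 (n := 0)); rewrite /nchildren /=; lia.
Qed.

Lemma black_sons_codes v : 1 < v -> black p (rho p) v ->
  has_codes p (sons p (rho p) v) [seq rcons (rev (code p v.-1)) h | h <- iota 1 (p - 3)].
Proof.
move=> v_gt1 black_v.
have F_eq : first_son p v = (shift p v.-1).+1.
  by case: (aligned_gt1 p_ge5 v_gt1) => [[] | [_ [/negP]]].
rewrite (sons_rho p_ge5) black_v F_eq /nsons.
apply: has_codes_iota => [|i i_lt]; first by rewrite size_map size_iota.
rewrite (nth_map 0) ?size_iota // nth_iota // addSn -addnS add1n.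
by apply: code_child_is_nzm; rewrite // nchildren_code_pred //; case: ifP; lia.
Qed.

Lemma white_sons_codes_edge v : ~~ black p (rho p) v ->
  signature p v = 1 \/ signature p v = p - 2 ->
  has_codes p (sons p (rho p) v)
    (rcons (rev (code p v.-2)) (p - 2) :: [seq rcons (rev (code p v.-1)) h.-1 | h <- iota 2 (p - 3)]).
Proof.
move=> white_v sig_v; have v_gt1 := white_gt1 white_v.
have [F_eq not_xb] : first_son p v = shift p v.-1 /\ ~~ xblocked p (code p v.-2).
  case: (aligned_gt1 p_ge5 v_gt1) => [[_ [black_v | ]] | [? [_ [_ ?]]]] //.
    by rewrite black_v in white_v.
  by case: sig_v => ->; lia.
rewrite (sons_rho p_ge5) (negbTE white_v) F_eq /nsons.
have [u v_eq] : exists u, v = u.+2 by exists v.-2; lia.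
rewrite v_eq -!pred_Sn in not_xb *.
apply: has_codes_iota => [|[|i] i_lt]; first by rewrite /= size_map size_iota; lia.
  rewrite addn0 shiftS // /nchildren (negbTE not_xb).
  by apply: (code_child_is_nzm p_ge5 (h := p - 2)); rewrite /nchildren (negbTE not_xb); lia.
rewrite /= (nth_map 0) ?size_iota ?nth_iota; try lia.
have -> : (2 + i).-1 = i.+1 by [].
apply: code_child_is_nzm; rewrite // (_ : u.+1 = u.+2.-1) // nchildren_code_pred //.
by case: ifP; lia.
Qed.

Lemma white_sons_codes_mid v : ~~ black p (rho p) v -> 1 < signature p v < p - 2 ->
  has_codes p (sons p (rho p) v)
    (rcons [seq rcons (rev (code p v.-1)) h | h <- iota 1 (p - 3)] (rcons (rev (code p v.-1)) (p - 2))).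
Proof.
move=> white_v sig_mid; have v_gt1 := white_gt1 white_v.
have F_eq : first_son p v = (shift p v.-1).+1.
  by case: (aligned_gt1 p_ge5 v_gt1) => [[] | [_ [_ [sig_v _]]]] //; case: sig_v; lia.
have nch : nchildren p (code p v.-1) = p - 2.
  by rewrite nchildren_code_pred // ifF //; apply/eqP; lia.
rewrite (sons_rho p_ge5) (negbTE white_v) F_eq /nsons.
apply: has_codes_iota => [|i i_lt]; first by rewrite size_rcons size_map size_iota; lia.
rewrite nth_rcons_map_iota; last lia.
rewrite addSn -addnS; case: ifP => i_cmp; last have -> : i.+1 = p - 2 by lia.
  by rewrite add1n; apply: code_child_is_nzm; rewrite // nch; lia.
by apply: code_child_is_nzm; rewrite // nch; lia.
Qed.

Lemma successor_son v : 0 < v ->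
  (shift p v).+1 = nth 0 (sons p (rho p) v.+1) 0 \/ (shift p v).+1 = nth 0 (sons p (rho p) v.+1) 1.
Proof.
move=> v_gt0; have n_ge2 := nsons_ge2 p_ge5 (black p (rho p) v.+1).
rewrite (sons_rho p_ge5) !nth_iota; try lia.
have v_gt1 : 1 < v.+1 by lia.
by case: (aligned_gt1 p_ge5 v_gt1) => [[F_eq _] | [F_eq _]]; rewrite -pred_Sn in F_eq; lia.
Qed.

Lemma root_no_child alpha a n : 0 < a -> n \in sons p alpha 1 -> ~ is_nzm_code p n [:: 1; a].
Proof.
move=> a_gt0; rewrite /sons mem_iota /= => n_range [_ [_ val]].
by move: val; rewrite (_ : [:: 1; a] = rev [:: a; 1]) // wordval_rev /= /metallic /=; lia.
Qed.

End SonCodes.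
Theorem theorem15 (p : nat) (hp : 5 <= p) :
  (* (1) root *)
  has_codes p (sons p (rho p) 1)
    (rcons [seq [:: h.+1] | h <- iota 1 (p - 4)] [:: p - 2]) /\
  (* (2) black non-root nodes *)
  (forall v, 1 < v -> black p (rho p) v ->
     exists u, is_nzm_code p v.-1 u /\
       has_codes p (sons p (rho p) v) [seq rcons u h | h <- iota 1 (p - 3)]) /\
  (* (3), (4) white nodes, according to the nzm-signature *)
  (forall v, 0 < v -> ~~ black p (rho p) v ->
     exists w, is_nzm_code p v w /\
       ((last 0 w = 1 \/ last 0 w = p - 2) ->
          exists u vv, is_nzm_code p v.-1 u /\ is_nzm_code p v.-2 vv /\
            has_codes p (sons p (rho p) v)
              (rcons vv (p - 2) :: [seq rcons u h.-1 | h <- iota 2 (p - 3)])) /\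
       (1 < last 0 w < p - 2 ->
          exists u, is_nzm_code p v.-1 u /\
            has_codes p (sons p (rho p) v)
              (rcons [seq rcons u h | h <- iota 1 (p - 3)] (rcons u (p - 2))))) /\
  (* no preferred son property, whatever the digit *)
  (forall a, 0 < a <= p - 2 -> ~ preferred_son p (rho p) a) /\
  (* successor of v is the leftmost or second son of v+1 *)
  (forall v, 0 < v ->
     exists w, is_nzm_code p v w /\
       exists n, is_nzm_code p n (rcons w 1) /\
         (n = nth 0 (sons p (rho p) v.+1) 0 \/ n = nth 0 (sons p (rho p) v.+1) 1)) /\
  (* no assignment / digit gives exactly one such son at every node *)
  (forall alpha, assignment p alpha -> forall a, 0 < a <= p - 2 ->
     ~ (forall v, 0 < v -> forall w, is_nzm_code p v w ->
          exists! n, n \in sons p alpha v /\ is_nzm_code p n (rcons w a))).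
Proof.
have nzm1 : is_nzm_code p 1 [:: 1] := code_is_nzm hp 1.
split; first exact: root_sons_codes.
split.
  move=> v v_gt1 black_v; exists (rev (code p v.-1)).
  by split; [exact: code_is_nzm | exact: black_sons_codes].
split.
  move=> v v_gt0 white_v; exists (rev (code p v)); rewrite last_rev_code //.
  split; first exact: code_is_nzm.
  split=> [sig_edge | sig_mid].
    exists (rev (code p v.-1)), (rev (code p v.-2)).
    by split; [|split]; [exact: code_is_nzm | exact: code_is_nzm | exact: white_sons_codes_edge].
  by exists (rev (code p v.-1)); split; [exact: code_is_nzm | exact: white_sons_codes_mid].
split.
  move=> a a_range preferred; have [n [n_son n_code]] := preferred 1 isT _ nzm1.
  by apply: root_no_child n_son n_code; lia.
split.
  move=> v v_gt0; exists (rev (code p v)); split; first exact: code_is_nzm.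
  exists (shift p v).+1; split; last exact: successor_son.
  by rewrite -addn1; apply: code_child_is_nzm; rewrite // /nchildren; case: ifP; lia.
move=> alpha _ a a_range unique_son.
have [n [[n_son n_code] _]] := unique_son 1 isT _ nzm1.
by apply: root_no_child n_son n_code; lia.
Qed.
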